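(* Let $m\ge 7$ be an integer. Then for every integer $n\ge m-1$, $$F_{n+2^{m-6},2}\equiv F_{n,2}\pmod{2^m},$$ i.e. from the term of index $m-1$ onward the sequence $(F_{n,2}\bmod 2^m)_{n\ge0}$ is periodic with period $2^{m-6}$.
   Context: For positive integers $r\le m\le n$, $S_r(n,m)$ denotes the $r$-Stirling number of the second kind: the number of partitions of $\{1,\dots,n\}$ into $m$ non-empty blocks such that $1,\dots,r$ lie in pairwise distinct blocks. For a positive integer $r$ and integer $n\ge 0$, the $r$-Fubini number is $F_{n,r}=\sum_{k=0}^{n}(k+r)!\,S_r(n+r,k+r)$. *)

From mathcomp Require Import all_boot.
Set Implicit Arguments. Unset Strict Implicit. Unset Printing Implicit Defensive.

(* r-Stirling number of the second kind: number of partitions of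
   {1,...,n} (encoded as 'I_n, element k+1 <-> ordinal k) into m non-empty
   blocks such that 1,...,r (ordinals of value < r) lie in pairwise distinct blocks. *)
Definition rstirling2 (r n m : nat) : nat :=
  #|[set P : {set {set 'I_n}} |
      [&& partition P [set: 'I_n], #|P| == m &
          [forall i : 'I_n, forall j : 'I_n,
             ((i < r) && (j < r) && (i != j)) ==> (pblock P i != pblock P j)]]]|.

Definition rfubini (n r : nat) : nat :=
  \sum_(0 <= k < n.+1) (k + r)`! * rstirling2 r (n + r) (k + r).

From mathcomp Require Import all_boot all_algebra.
From mathcomp Require Import ring zify.
Set Implicit Arguments. Unset Strict Implicit. Unset Printing Implicit Defensive.
Import GRing.Theory Num.Theory.

(* Sorting the maps {1..n+2} -> {1..X} that separate 1 and 2 by their kernel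
   partitions gives X^(n+2) - X^(n+1) = sum_K S_2(n+2,K) X(X-1)...(X-K+1).  Hence
   (k+2)! S_2(n+2,k+2) is the (k+2)-th forward difference of x^(n+2) - x^(n+1) at 0,
   and F_{n,2} is the sum of these differences.  A j-th difference at 0 is divisible
   by j!, so modulo 2^m only the first 2m-2 of them count, and expanding them
   writes F_{n,2} = sum_i a_i b_i^(n+1) mod 2^m for fixed integers a_i, b_i; once
   n >= m-1 the even bases drop out.  An odd base has b^2 = 1 + 8w, and squaring
   repeatedly gives b^(2^(s+1)) = 1 + 8Pw + 32P(P-1)w^2 mod 128P, where P = 2^s.
   So shifting n by 2^(s+1) changes F_{n,2} modulo 2^(s+7) = 128P by 8PA + 32P(P-1)B,
   with A = sum a_i b_i^(n+1) w_i and B = sum a_i b_i^(n+1) w_i^2.  The cases m = 7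
   and m = 8 of the theorem, which are finite computations modulo 16, amount to
   16 | A and 4 | B, and these make the shift vanish for every m. *)

Lemma card_partition_le (T : finType) (P : {set {set T}}) (D : {set T}) :
  partition P D -> #|P| <= #|D|.
Proof.
move=> partP; rewrite (card_partition partP) -sum1_card leq_sum // => A PA.
by rewrite card_gt0 (partition_neq0 partP PA).
Qed.

Lemma rstirling2_small r N K : N < K -> rstirling2 r N K = 0.
Proof.
move=> ltNK; apply: eq_card0 => P; rewrite !inE; apply/and3P => -[partP /eqP cardP _].
by have := card_partition_le partP; rewrite cardP cardsT card_ord leqNgt ltNK.
Qed.

Section KernelPartition.
Variables (N X : nat).
Implicit Type P : {set {set 'I_N}}.

Lemma eq_pblock_preim (f : {ffun 'I_N -> 'I_X}) x y :
  (pblock (preim_partition f [set: 'I_N]) x == pblock (preim_partition f [set: 'I_N]) y)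
  = (f x == f y).
Proof.
have /and3P[/eqP defT tiP _] := preim_partitionP f [set: 'I_N].
rewrite eq_pblock // ?defT ?inE // pblock_equivalence_partition ?inE //.
by move=> a b c _ _ _; split=> // /eqP ->.
Qed.

(* A function with kernel partition P is an injection of the blocks of P into 'I_X. *)
Lemma card_preim_partition P : partition P [set: 'I_N] ->
  #|[set f : {ffun 'I_N -> 'I_X} | preim_partition f [set: 'I_N] == P]| = X ^_ #|P|.
Proof.
move=> partP; have /and3P[/eqP defT tiP notP0] := partP.
have P_pblock i : pblock P i \in P by rewrite pblock_mem // defT inE.
pose rk i := enum_rank_in (P_pblock i) (pblock P i).
pose blk (k : 'I_#|P|) : {set 'I_N} := enum_val k.
pose lift_blocks (g : {ffun 'I_#|P| -> 'I_X}) := [ffun i => g (rk i)].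
have blk_nonempty k : exists x, x \in blk k.
  apply/set0Pn; apply: contraNneq notP0 => <-; exact: enum_valP.
pose elt k := xchoose (blk_nonempty k).
have pblock_elt k : pblock P (elt k) = blk k.
  exact: def_pblock tiP (enum_valP k) (xchooseP (blk_nonempty k)).
have rk_elt k : rk (elt k) = k.
  by rewrite /rk [X in enum_rank_in _ X]pblock_elt enum_valK_in.
have lift_inj : injective lift_blocks.
  by move=> g1 g2 /ffunP e; apply/ffunP => k; have := e (elt k); rewrite !ffunE rk_elt.
have -> : [set f : {ffun 'I_N -> 'I_X} | preim_partition f [set: 'I_N] == P]
          = lift_blocks @: [set g : {ffun 'I_#|P| -> 'I_X} | injectiveb g].
  apply/setP => f; rewrite !inE; apply/eqP/imsetP => [kerf | [g]].
    have eq_pblockP x y : (pblock P x == pblock P y) = (f x == f y).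
      by rewrite -kerf eq_pblock_preim.
    exists [ffun k => f (elt k)].
      rewrite inE; apply/injectiveP => k1 k2; rewrite !ffunE => /eqP.
      by rewrite -eq_pblockP !pblock_elt => /eqP /enum_val_inj.
    apply/ffunP => i; rewrite !ffunE; apply/eqP; rewrite -eq_pblockP pblock_elt.
    by rewrite /blk enum_rankK_in.
  rewrite inE => /injectiveP g_inj ->; rewrite -[RHS](preim_partition_pblock partP).
  apply: eq_in_imset => x _; apply/setP => y; rewrite !inE !ffunE (inj_eq g_inj).
  congr (_ && _); apply/eqP/eqP => [|e]; first exact: enum_rank_in_inj.
  by apply: enum_val_inj; rewrite /rk !enum_rankK_in.
rewrite card_in_imset; last by move=> g1 g2 _ _; exact: lift_inj.
by rewrite card_inj_ffuns !card_ord.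
Qed.

End KernelPartition.

Section SeparatedPartitions.
Variable n : nat.
Local Notation N := n.+2.
Local Notation one := (@Ordinal N 1 isT).

Lemma separated2E (P : {set {set 'I_N}}) :
  [forall i : 'I_N, forall j : 'I_N,
     ((i < 2) && (j < 2) && (i != j)) ==> (pblock P i != pblock P j)]
  = (pblock P ord0 != pblock P one).
Proof.
apply/forallP/idP => [/(_ ord0)/forallP/(_ one) // | sep01] i; apply/forallP => j.
apply/implyP => /andP[/andP[lti ltj]].
have ord2 (k : 'I_N) : k < 2 -> k = ord0 \/ k = one.
  by case: k => [[|[|k]] ?] // _; [left | right]; apply: val_inj.
have [->|->] := ord2 _ lti; have [->|->] := ord2 _ ltj; rewrite ?eqxx // => _.
by rewrite eq_sym.
Qed.

Lemma card_ffun_separated X :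
  #|[set f : {ffun 'I_N -> 'I_X} | f ord0 != f one]|
  = \sum_(K < N.+1) rstirling2 2 N K * X ^_ K.
Proof.
pose sep P := partition P [set: 'I_N] && (pblock P ord0 != pblock P one).
have sep_preim (f : {ffun 'I_N -> 'I_X}) :
    sep (preim_partition f [set: 'I_N]) = (f ord0 != f one).
  by rewrite /sep preim_partitionP eq_pblock_preim.
rewrite -sum1_card (partition_big (fun f : {ffun 'I_N -> 'I_X} =>
  preim_partition f [set: 'I_N]) sep) /=; last by move=> f; rewrite inE sep_preim.
under eq_bigr => P /andP[partP sepP].
  rewrite (eq_bigl (mem [set f : {ffun 'I_N -> 'I_X} | preim_partition f [set: 'I_N] == P])).
    by rewrite sum1_card (card_preim_partition X partP) over.
  move=> f; rewrite !inE; apply/andP/idP => [[] // | kerf]; split=> //.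
  by rewrite -sep_preim (eqP kerf) /sep partP.
have small P : partition P [set: 'I_N] -> #|P| < N.+1.
  by move/card_partition_le; rewrite cardsT card_ord ltnS.
rewrite /= (partition_big (fun P : {set {set 'I_N}} => inord #|P| : 'I_N.+1) predT) //=.
apply: eq_bigr => K _; rewrite /rstirling2 -sum1_card big_distrl /=.
apply: eq_big => [P | P]; last first.
  by case/andP=> /andP[partP _] /eqP <-; rewrite mul1n inordK ?small.
rewrite !inE separated2E; apply/andP/and3P.
  by case=> /andP[partP sepP] /eqP <-; rewrite inordK ?small.
case=> partP /eqP cardP sepP; split; first by rewrite /sep partP.
by apply/eqP/val_inj; rewrite /= -cardP inordK ?small.
Qed.

Lemma card_ffun_identified X :
  #|[set f : {ffun 'I_N -> 'I_X} | f ord0 == f one]| = X ^ n.+1.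
Proof.
pose drop0 (f : {ffun 'I_N -> 'I_X}) := [ffun i : 'I_n.+1 => f (lift ord0 i)].
have lift01 : lift ord0 ord0 = one :> 'I_N by apply: val_inj.
have drop0_inj : {in [set f : {ffun 'I_N -> 'I_X} | f ord0 == f one] &, injective drop0}.
  move=> f g; rewrite !inE => /eqP f01 /eqP g01 /ffunP eq_fg; apply/ffunP => i.
  have [j ->|->] := unliftP ord0 i; first by have := eq_fg j; rewrite !ffunE.
  by rewrite f01 g01 -lift01; have := eq_fg ord0; rewrite !ffunE.
have drop0_onto : drop0 @: [set f : {ffun 'I_N -> 'I_X} | f ord0 == f one] = setT.
  apply/setP => g; rewrite inE; apply/imsetP.
  exists [ffun i => if unlift ord0 i is Some j then g j else g ord0].
    by rewrite inE !ffunE -lift01 liftK unlift_none.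
  by apply/ffunP => i; rewrite !ffunE liftK.
by rewrite -(card_in_imset drop0_inj) drop0_onto cardsT card_ffun !card_ord.
Qed.

Lemma pow_sub_stirling X : X ^ N - X ^ n.+1 = \sum_(K < N.+1) rstirling2 2 N K * X ^_ K.
Proof.
rewrite -card_ffun_separated -card_ffun_identified.
have := cardsC [set f : {ffun 'I_N -> 'I_X} | f ord0 == f one].
by rewrite card_ffun !card_ord => <-; rewrite addKn; apply: eq_card => f; rewrite !inE.
Qed.

End SeparatedPartitions.

Lemma pow2_dvdn_fact M n :
  (M <= \sum_(1 <= k < n.+1) n %/ 2 ^ k)%N -> (2 ^ M %| n`!)%N.
Proof. by rewrite (pfactor_dvdn M (isT : prime 2) (fact_gt0 n)) logn_fact. Qed.

Lemma pow2_dvdn_fact_double M : (2 ^ M %| (M.*2)`!)%N.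
Proof.
apply: pow2_dvdn_fact; case: M => // M.
by rewrite big_ltn // expn1 -muln2 mulnK // leq_addr.
Qed.

Local Open Scope ring_scope.

Lemma dvdz_periodic (d : int) p (f : nat -> int) : (0 < p)%N ->
  (forall n, (d %| f (n + p)%N - f n)%Z) -> (forall r, (r < p)%N -> (d %| f r)%Z) ->
  forall n, (d %| f n)%Z.
Proof.
move=> p_gt0 f_per f_base n; rewrite (divn_eq n p) addnC.
elim: (n %/ p)%N => [|q IHq]; first by rewrite mul0n addn0 f_base ?ltn_pmod.
rewrite mulSnr addnA -[f _](subrK (f (n %% p + q * p)%N)).
by apply: rpredD IHq; apply: f_per.
Qed.

Lemma dvdz_Zp d (x : int) : (1 < d)%N -> (x%:~R : 'Z_d) = 0 -> (d%:Z %| x)%Z.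
Proof.
move=> d_gt1; rewrite dvdzE; case: x => k; rewrite ?NegzE ?mulrNz => /eqP;
  rewrite ?oppr_eq0 -pmulrn => /eqP /(congr1 (@nat_of_ord _)).
all: by rewrite val_Zp_nat // ?abszN => /eqP.
Qed.

Lemma dvdz_sub_congr (d x x' y y' : int) : (d %| x - x')%Z -> (d %| y - y')%Z ->
  (d %| x - y)%Z = (d %| x' - y')%Z.
Proof.
move=> dx dy; have -> : x - y = (x - x') - (y - y') + (x' - y') by ring.
by rewrite rpredDl // rpredB.
Qed.

Fixpoint fdiff (k : nat) (f : nat -> int) (x : nat) : int :=
  if k is k'.+1 then fdiff k' f x.+1 - fdiff k' f x else f x.
Arguments fdiff : simpl never.

Lemma fdiff0 f x : fdiff 0 f x = f x.
Proof. by []. Qed.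

Lemma fdiffS k f x : fdiff k.+1 f x = fdiff k f x.+1 - fdiff k f x.
Proof. by []. Qed.

Lemma eq_fdiff k f g : f =1 g -> fdiff k f =1 fdiff k g.
Proof. by move=> eq_fg; elim: k => [|k IHk] x; rewrite ?fdiffS ?IHk. Qed.

Lemma fdiff_sum (I : finType) (c : I -> int) (g : I -> nat -> int) k x :
  fdiff k (fun y => \sum_i c i * g i y) x = \sum_i c i * fdiff k (g i) x.
Proof.
elim: k x => [|k IHk] x //; rewrite !fdiffS !IHk -sumrB.
by apply: eq_bigr => i _; rewrite mulrBr.
Qed.

Lemma ffactS_sub x J : (x.+1 ^_ J)%:Z - (x ^_ J)%:Z = (J * x ^_ J.-1)%:Z.
Proof.
case: J => [|j]; first by rewrite subrr.
rewrite ffactSS ffactnSr /=.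
have [ltxj | lejx] := ltnP x j; first by rewrite ffact_small // !muln0 mul0n subrr.
by rewrite !PoszM -(subzn lejx) intS; ring.
Qed.

Lemma fdiff_ffact k K x :
  fdiff k (fun y => (y ^_ K)%:Z) x = (K ^_ k * x ^_ (K - k))%:Z.
Proof.
elim: k x => [|k IHk] x; first by rewrite fdiff0 subn0 mul1n.
by rewrite fdiffS !IHk ffactnSr subnS !PoszM -mulrBr ffactS_sub PoszM mulrA.
Qed.

Lemma fdiffE k f x :
  fdiff k f x = \sum_(i < k.+1) (-1) ^+ (k - i) * 'C(k, i)%:Z * f (x + i)%N.
Proof.
elim: k x => [|k IHk] x; first by rewrite fdiff0 big_ord1 addn0 mul1r.
rewrite fdiffS !IHk [in RHS]big_ord_recl /= subn0 bin0 mulr1 addn0.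
under [in RHS]eq_bigr => i _ do rewrite /bump /= add1n subSS binS PoszD mulrDr mulrDl.
rewrite big_split /= addrA addrC; congr (_ + _).
  by apply: eq_bigr => i _; rewrite addSnnS.
rewrite big_ord_recl big_ord_recr /= subn0 bin0 bin_small // mulr0 mul0r addr0.
rewrite mulr1 addn0 exprS mulN1r mulNr opprD; congr (_ + _).
rewrite -sumrN; apply: eq_bigr => i _; rewrite /bump /= add1n addnS.
by rewrite -(subnSK (ltn_ord i)) exprS !mulNr mul1r.
Qed.

Definition tri (c : nat) : nat := (c * c.+1)./2.

Lemma odd_sqr_tri b : odd b -> (b ^ 2 = 8 * tri b./2 + 1)%N.
Proof.
move=> odd_b; rewrite /tri; set c := b./2.
have -> : b = c.*2.+1 by rewrite -[LHS]odd_double_half odd_b add1n.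
have : (c * c.+1)./2.*2 = c * c.+1.
  by rewrite -[RHS]odd_double_half oddM /= andbN add0n.
rewrite -!muln2; nia.
Qed.

Lemma odd_sqr_triz b : odd b -> b%:Z ^+ 2 = 1 + 8 * (tri b./2)%:Z.
Proof. by move=> odd_b; rewrite -[b%:Z]natz -natrX natz odd_sqr_tri // addrC. Qed.

Lemma pow2_expansion (x v : int) s (P := (2 ^ s)%:Z) : x ^+ 2 = 1 + 8 * v ->
  (128 * P %| x ^+ (2 ^ s.+1) - (1 + 8 * P * v + 32 * P * (P - 1) * v ^+ 2))%Z.
Proof.
move=> x2; elim: s @P => [|s IHs] /=.
  by apply/dvdzP; exists 0; rewrite expn1 x2; ring.
have [R] := dvdzP IHs; set P := Posz (2 ^ s) => /(canRL (subrK _)) xE.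
rewrite [(2 ^ s.+2)%N]expnSr exprM xE [(2 ^ s.+1)%N]expnS PoszM -/P; apply/dvdzP.
exists (2 * P * (P - 1) * v ^+ 3 + 4 * P * (P - 1) ^+ 2 * v ^+ 4 + 64 * P * R ^+ 2
        + R * (1 + 8 * P * v + 32 * P * (P - 1) * v ^+ 2)).
ring.
Qed.

Section OddPowerSums.
Variables (I : finType) (b : I -> nat).
Implicit Type c : I -> int.

Definition power_sum c n := \sum_i c i * (b i)%:Z ^+ n.+1.
Definition odd_power_sum c n := \sum_(i | odd (b i)) c i * (b i)%:Z ^+ n.+1.
Definition tri_weight c i := c i * (tri (b i)./2)%:Z.

Lemma power_sum_odd c M n : (M <= n.+1)%N ->
  ((2 ^ M)%:Z %| power_sum c n - odd_power_sum c n)%Z.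
Proof.
move=> leMn; rewrite /power_sum (bigID (fun i => odd (b i))) /= addrAC subrr add0r.
apply: rpred_sum => i even_bi; apply: dvdz_mull.
rewrite -[(b i)%:Z]natz -natrX natz dvdzE /= (dvdn_trans (dvdn_exp2l 2 leMn)) //.
by rewrite dvdn_exp2r // dvdn2.
Qed.

Lemma odd_power_sum_shift2 c n :
  odd_power_sum c (n + 2) - odd_power_sum c n = 8 * odd_power_sum (tri_weight c) n.
Proof.
rewrite /odd_power_sum mulr_sumr -sumrB; apply: eq_bigr => i odd_bi.
by rewrite /tri_weight -addSn exprD odd_sqr_triz //; ring.
Qed.

Lemma odd_power_sum_shift4 c n :
  odd_power_sum c (n + 4) - odd_power_sum c n
  = 16 * (odd_power_sum (tri_weight c) n + 4 * odd_power_sum (tri_weight (tri_weight c)) n).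
Proof.
have shift2 := odd_power_sum_shift2.
rewrite (_ : (n + 4 = n + 2 + 2)%N); last by rewrite -addnA.
rewrite -[X in X - _](subrK (odd_power_sum c (n + 2))) -addrA !shift2.
rewrite -[X in 8 * X](subrK (odd_power_sum (tri_weight c) n)) shift2; ring.
Qed.

Lemma odd_power_sum_period4 c n : (16 %| odd_power_sum c (n + 4) - odd_power_sum c n)%Z.
Proof. by rewrite odd_power_sum_shift4 dvdz_mulr. Qed.

Lemma odd_power_sum_shift_pow2 c n s (P := (2 ^ s)%:Z) :
  (128 * P %| odd_power_sum c (n + 2 ^ s.+1) - odd_power_sum c n
     - (8 * P * odd_power_sum (tri_weight c) n
        + 32 * P * (P - 1) * odd_power_sum (tri_weight (tri_weight c)) n))%Z.
Proof.
rewrite /odd_power_sum !mulr_sumr -!sumrB -big_split -sumrB /=.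
apply: rpred_sum => i odd_bi; rewrite /tri_weight -addSn exprD.
have := pow2_expansion s (odd_sqr_triz odd_bi); rewrite -/P.
set E := _ - _ => dvdE; rewrite (_ : _ - _ = c i * (b i)%:Z ^+ n.+1 * E).
  exact: dvdz_mull.
by rewrite /E; ring.
Qed.

Lemma odd_power_sum_approx c (F : nat -> int) M k :
  ((2 ^ M)%:Z %| F k - power_sum c k)%Z -> (M <= k.+1)%N ->
  ((2 ^ M)%:Z %| F k - odd_power_sum c k)%Z.
Proof.
move=> F_approx leMk; rewrite -(subrKA (power_sum c k)).
by rewrite rpredD ?power_sum_odd.
Qed.

Lemma lift_period c (F : nat -> int) s n :
  (forall k, (n <= k)%N -> ((2 ^ (s + 7))%:Z %| F k - odd_power_sum c k)%Z) ->
  (128 %| F (n + 2)%N - F n)%Z ->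
  ((0 < s)%N -> (256 %| F (n + 4)%N - F n)%Z) ->
  ((2 ^ (s + 7))%:Z %| F (n + 2 ^ s.+1)%N - F n)%Z.
Proof.
move=> F_odd F_per2 F_per4.
set P := (2 ^ s)%:Z; set A := odd_power_sum (tri_weight c) n.
set B := odd_power_sum (tri_weight (tri_weight c)) n.
have eq_d : (2 ^ (s + 7))%:Z = 128 * P by rewrite expnD mulnC PoszM.
have F_odd_mod d k : (d %| (2 ^ (s + 7))%:Z)%Z -> (n <= k)%N ->
    (d %| F k - odd_power_sum c k)%Z.
  by move=> dvd_d /F_odd; apply: dvdz_trans.
have d128 : (128 %| (2 ^ (s + 7))%:Z)%Z by rewrite eq_d dvdz_mulr.
have A16 : (16 %| A)%Z.
  move: F_per2; rewrite (dvdz_sub_congr (F_odd_mod _ _ d128 (leq_addr 2 n))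
    (F_odd_mod _ _ d128 (leqnn n))) odd_power_sum_shift2.
  by rewrite (_ : 128 = 8 * 16) // dvdz_mul2l.
have B4 : (0 < s)%N -> (4 %| B)%Z.
  move=> s_gt0; have d256 : (256 %| (2 ^ (s + 7))%:Z)%Z.
    rewrite (_ : (s + 7 = s.-1 + 8)%N); last by lia.
    by rewrite expnD PoszM dvdz_mull.
  move: (F_per4 s_gt0); rewrite (dvdz_sub_congr (F_odd_mod _ _ d256 (leq_addr 4 n))
    (F_odd_mod _ _ d256 (leqnn n))) odd_power_sum_shift4 -/A -/B.
  by rewrite (_ : 256 = 16 * 16) // dvdz_mul2l // rpredDl // (_ : 16 = 4 * 4) // dvdz_mul2l.
have EA : (128 * P %| 8 * P * A)%Z.
  by have [q ->] := dvdzP A16; apply/dvdzP; exists q; ring.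
have EB : (128 * P %| 32 * P * (P - 1) * B)%Z.
  case: (posnP s) => [s0 | s_gt0]; first by rewrite /P s0 subrr !mulr0 mul0r dvdz0.
  by have [q ->] := dvdzP (B4 s_gt0); apply/dvdzP; exists ((P - 1) * q); ring.
rewrite (dvdz_sub_congr (F_odd _ (leq_addr _ n)) (F_odd _ (leqnn n))) eq_d.
rewrite -(subrK (8 * P * A + 32 * P * (P - 1) * B) (_ - _)).
by apply: rpredD (rpredD EA EB); apply: odd_power_sum_shift_pow2.
Qed.

End OddPowerSums.

Definition fubini_poly (n x : nat) : int := x%:Z ^+ n.+2 - x%:Z ^+ n.+1.

Lemma fubini_poly_ffact n x :
  fubini_poly n x = \sum_(K < n.+3) (rstirling2 2 n.+2 K)%:Z * (x ^_ K)%:Z.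
Proof.
have le_pow : (x ^ n.+1 <= x ^ n.+2)%N by case: x => [|x]; rewrite ?exp0n // leq_pexp2l.
rewrite /fubini_poly -[x%:Z]natz -!natrX !natz (subzn le_pow) pow_sub_stirling.
by rewrite (big_morph Posz PoszD (erefl 0%:Z)); apply: eq_bigr => K _; rewrite PoszM.
Qed.

Lemma fdiff_fubini_poly n j : fdiff j (fubini_poly n) 0 = (j`! * rstirling2 2 n.+2 j)%:Z.
Proof.
rewrite (eq_fdiff _ (fubini_poly_ffact n)) fdiff_sum.
under eq_bigr => K _ do rewrite fdiff_ffact ffact0n -PoszM.
have [ltj | lej] := ltnP j n.+3; last first.
  rewrite rstirling2_small ?muln0 // big1 // => K _.
  by rewrite ffact_small ?mul0n ?muln0 // (leq_trans (ltn_ord K)).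
rewrite (bigD1 (Ordinal ltj)) //= subnn ffactnn muln1 mulnC big1 ?addr0 // => K neqKj.
have [ltKj | ltjK | eqKj] := ltngtP K j.
- by rewrite ffact_small // mul0n muln0.
- by rewrite subn_eq0 leqNgt ltjK !muln0.
- by case/eqP: neqKj; apply: val_inj.
Qed.

Definition fubini_coef (k i : nat) : int :=
  (-1) ^+ (k.+2 - i) * 'C(k.+2, i)%:Z * (i%:Z - 1).

Lemma fdiff_fubini_poly_power_sum n L k : (k < L)%N ->
  fdiff k.+2 (fubini_poly n) 0 = \sum_(i < L.+2) fubini_coef k i * i%:Z ^+ n.+1.
Proof.
move=> ltkL; rewrite fdiffE (big_ord_widen L.+2 (fun i =>
  (-1) ^+ (k.+2 - i) * 'C(k.+2, i)%:Z * fubini_poly n (0 + i)%N)) ?ltnS //.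
rewrite big_mkcond; apply: eq_bigr => i _; rewrite /fubini_coef /fubini_poly add0n.
case: ifP => [_ | /negbT]; first by rewrite exprS; ring.
by rewrite -leqNgt => /bin_small ->; rewrite mulr0 !mul0r.
Qed.

Lemma rfubini_fdiff n K : (n < K)%N ->
  (rfubini n 2)%:Z = \sum_(k < K) fdiff k.+2 (fubini_poly n) 0.
Proof.
move=> ltnK; rewrite /rfubini (big_morph Posz PoszD (erefl 0%:Z)).
rewrite -(big_mkord xpredT (fun k => fdiff k.+2 (fubini_poly n) 0)).
rewrite (big_cat_nat (leq0n n.+1) ltnK) //= [X in _ + X]big1_seq ?addr0.
  by apply: eq_bigr => k _; rewrite fdiff_fubini_poly !addn2.
move=> k /andP[_]; rewrite mem_index_iota => /andP[ltnk _].
by rewrite fdiff_fubini_poly rstirling2_small ?muln0 // !ltnS.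
Qed.

Section FubiniPowerSum.
Variable L : nat.

(* The pair (k, i) indexes the term of [Δ^(k+2)] at the base [i]. *)
Definition fubini_base (p : 'I_L * 'I_L.+2) : nat := p.2.
Definition fubini_weight (p : 'I_L * 'I_L.+2) : int := fubini_coef p.1 p.2.

Lemma rfubini_power_sum d n : (d %| (L.+2)`!)%N ->
  (d%:Z %| (rfubini n 2)%:Z - power_sum fubini_base fubini_weight n)%Z.
Proof.
move=> dvd_d_fact; rewrite (@rfubini_fdiff n (L + n.+1)) ?ltn_addl //.
rewrite -(big_mkord xpredT (fun k => fdiff k.+2 (fubini_poly n) 0)).
rewrite (big_cat_nat (leq0n L) (leq_addr n.+1 L)) //= big_mkord.
rewrite (eq_bigr _ (fun k _ => fdiff_fubini_poly_power_sum n (ltn_ord k))) pair_bigA.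
rewrite addrAC subrr add0r big_seq rpred_sum // => k.
rewrite mem_index_iota => /andP[leLk _]; rewrite fdiff_fubini_poly dvdzE /=.
rewrite dvdn_mulr // (dvdn_trans dvd_d_fact) //.
by rewrite (@fact_split k.+2 L.+2) ?ltnS // dvdn_mulr.
Qed.

Lemma rfubini_odd_power_sum M n : (2 ^ M %| (L.+2)`!)%N -> (M <= n.+1)%N ->
  ((2 ^ M)%:Z %| (rfubini n 2)%:Z - odd_power_sum fubini_base fubini_weight n)%Z.
Proof.
move=> /(rfubini_power_sum n).
exact: (@odd_power_sum_approx _ _ _ (fun k => (rfubini k 2)%:Z)).
Qed.

(* Sums over product finTypes do not evaluate under [vm_compute]; nat ranges do. *)
Lemma odd_power_sum_fubini (R : pzRingType) (g : nat -> nat -> int) n :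
  (odd_power_sum fubini_base (fun p => g p.1 p.2) n)%:~R
  = \sum_(0 <= k < L) \sum_(0 <= i < L.+2 | odd i) (g k i)%:~R * i%:R ^+ n.+1 :> R.
Proof.
rewrite /odd_power_sum rmorph_sum -(pair_big_dep xpredT (fun _ (i : 'I_L.+2) => odd i)
  (fun (k : 'I_L) (i : 'I_L.+2) => (g k i * i%:Z ^+ n.+1)%:~R)) big_mkord.
apply: eq_bigr => k _; rewrite big_mkord.
by apply: eq_bigr => i _; rewrite rmorphM rmorphXn.
Qed.

End FubiniPowerSum.

(* Since [b^4 = 1 mod 16] for odd [b], the sums below are 4-periodic mod 16, so
   it suffices to evaluate them in ['Z_16] for four exponents. *)
Lemma rfubini_period2 n : (6 <= n)%N ->
  (128 %| (rfubini (n + 2) 2)%:Z - (rfubini n 2)%:Z)%Z.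
Proof.
move=> le6n; set b := @fubini_base 6; set c := @fubini_weight 6.
have A16 : (16 %| odd_power_sum b (tri_weight b c) n)%Z.
  apply: (@dvdz_periodic _ 4 (odd_power_sum b (tri_weight b c))) => // [j | r ltr4].
    exact: odd_power_sum_period4.
  apply: dvdz_Zp => //; rewrite /tri_weight.
  rewrite (@odd_power_sum_fubini 6 _ (fun k i => fubini_coef k i * (tri i./2)%:Z)).
  under eq_bigr => k _ do under eq_bigr => i _ do rewrite rmorphM.
  by apply/eqP; rewrite unlock; case: r ltr4 => [|[|[|[|]]]] // _; vm_compute.
have dvd_fact : (2 ^ 7 %| 8`!)%N by apply: pow2_dvdn_fact; rewrite unlock.
have F_odd k : (6 <= k)%N -> (128 %| (rfubini k 2)%:Z - odd_power_sum b c k)%Z.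
  exact: (@rfubini_odd_power_sum _ _ k dvd_fact).
rewrite (dvdz_sub_congr (F_odd _ (leq_trans le6n (leq_addr 2 n))) (F_odd _ le6n)).
by rewrite odd_power_sum_shift2; apply: dvdz_mul (dvdzz 8) A16.
Qed.

Lemma rfubini_period4 n : (7 <= n)%N ->
  (256 %| (rfubini (n + 4) 2)%:Z - (rfubini n 2)%:Z)%Z.
Proof.
move=> le7n; set b := @fubini_base 8; set c := @fubini_weight 8.
pose AB k := odd_power_sum b (tri_weight b c) k
             + 4 * odd_power_sum b (tri_weight b (tri_weight b c)) k.
have AB16 : (16 %| AB n)%Z.
  apply: (@dvdz_periodic _ 4 AB) => // [j | r ltr4].
    rewrite /AB (_ : _ - _ = odd_power_sum b (tri_weight b c) (j + 4)
        - odd_power_sum b (tri_weight b c) j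
        + 4 * (odd_power_sum b (tri_weight b (tri_weight b c)) (j + 4)
               - odd_power_sum b (tri_weight b (tri_weight b c)) j)); last by ring.
    by rewrite rpredD ?dvdz_mull ?odd_power_sum_period4.
  apply: dvdz_Zp => //; rewrite /AB intrD intrM /tri_weight.
  rewrite (@odd_power_sum_fubini 8 _ (fun k i => fubini_coef k i * (tri i./2)%:Z)).
  rewrite (@odd_power_sum_fubini 8 _
    (fun k i => fubini_coef k i * (tri i./2)%:Z * (tri i./2)%:Z)).
  under eq_bigr => k _ do under eq_bigr => i _ do rewrite rmorphM.
  under [in X in _ * X]eq_bigr => k _ do under eq_bigr => i _ do rewrite !rmorphM.
  by apply/eqP; rewrite unlock; case: r ltr4 => [|[|[|[|]]]] // _; vm_compute.
have dvd_fact : (2 ^ 8 %| 10`!)%N by apply: pow2_dvdn_fact; rewrite unlock.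
have F_odd k : (7 <= k)%N -> (256 %| (rfubini k 2)%:Z - odd_power_sum b c k)%Z.
  exact: (@rfubini_odd_power_sum _ _ k dvd_fact).
rewrite (dvdz_sub_congr (F_odd _ (leq_trans le7n (leq_addr 4 n))) (F_odd _ le7n)).
by rewrite odd_power_sum_shift4; apply: dvdz_mul (dvdzz 16) AB16.
Qed.

Local Close Scope ring_scope.

Lemma eqn_mod_dvdz d a b : (a == b %[mod d]) = (d%:Z %| (a%:Z - b%:Z)%R)%Z.
Proof. by rewrite -eqz_mod_dvd !modz_nat eqz_nat. Qed.

Theorem theorem4p4 (m : nat) (hm : 7 <= m) (n : nat) (hn : m - 1 <= n) :
  rfubini (n + 2 ^ (m - 6)) 2 = rfubini n 2 %[mod 2 ^ m].
Proof.
have [s em] : exists s, m = s + 7 by exists (m - 7); rewrite subnK.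
subst m; rewrite (_ : s + 7 - 6 = s.+1); last by lia.
apply/eqP; rewrite eqn_mod_dvdz.
apply: (@lift_period _ _ (@fubini_weight (s + 6).*2) (fun k => (rfubini k 2)%:Z)%R).
- move=> k le_nk; apply: rfubini_odd_power_sum; last by lia.
  by rewrite -doubleS -addnS pow2_dvdn_fact_double.
- by apply: rfubini_period2; lia.
- by move=> s_gt0; apply: rfubini_period4; lia.
Qed.
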